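(* Fix $a\in(0,1/2)$ and $b\in(0,1)$. There exist an absolute constant $C\in(0,1)$ and constants $K,c_1,c_2>0$ depending only on $a,b$ such that for every spread process with parameters $(G,r,T,a,b)$ and every $t\ge1$, $$\big(1-e^{-c_1t^{c_2}}\big)\frac{V_G(r,\lfloor bt-Kt^{1-C}\rfloor)}{V_G(r,t)}\ \le\ \mathbb{E}[\lambda_{G,r}(t)]\ \le\ \frac{V_G(r,\lfloor bt+Kt^{1-C}\rfloor)}{V_G(r,t)}+e^{-c_1t^{c_2}},$$ with the convention $V_G(r,\rho)=0$ for $\rho<0$.
   Context: Spread process. Fix $a,b\in[0,1]$. Let $G=(V,E)$ be a connected, locally finite, undirected graph (finite or countably infinite), $r\in V$ a root, and $T$ a BFS spanning tree of $G$ rooted at $r$ (i.e. $d_T(r,v)=d_G(r,v)$), oriented away from $r$, with parent $p(v)$ for $v\ne r$. The spread process with parameters $(G,r,T,a,b)$ is the random sequence $f_t:V\to\{+1,-1,\bot\}$: $f_t(r)=+1$ for all $t$; $f_0(v)=\bot$ for $v\ne r$; for $t\ge1$ and each $v\ne r$ independently: if $f_{t-1}(v)=\bot\ne f_{t-1}(p(v))$ then $f_t(v)=f_{t-1}(p(v))$ w.p. $1-a$ and $-f_{t-1}(p(v))$ w.p. $a$; if $f_{t-1}(v)\ne\bot$ then $f_t(v)=f_{t-1}(p(v))$ w.p. $b$ and $f_{t-1}(v)$ w.p. $1-b$; if $f_{t-1}(v)=f_{t-1}(p(v))=\bot$ then $f_t(v)=\bot$. Volume: $B_{\rho,G}(v)=\{u:d_G(v,u)\le\rho\}$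 and $V_G(v,\rho)=|B_{\rho,G}(v)|$. Note $\{v:f_t(v)\ne\bot\}=B_{t,G}(r)$. Opinion bias: $\lambda_{G,r}(t)=\dfrac{|\{v:f_t(v)=+1\}|-|\{v:f_t(v)=-1\}|}{|\{v:f_t(v)\ne\bot\}|}$. *)

From HB Require Import structures.
From mathcomp Require Import all_boot all_order all_algebra.
From mathcomp Require Import all_classical all_reals all_analysis.
From mathcomp Require Import finmap.
Set Implicit Arguments. Unset Strict Implicit. Unset Printing Implicit Defensive.
Import Order.TTheory GRing.Theory Num.Theory.
Local Open Scope classical_set_scope.
Local Open Scope ring_scope.
Local Open Scope fset_scope.

Section Graph.
Variable V : countType.
Variable adj : rel V.

Fixpoint inball (k : nat) (v u : V) : Prop :=
  match k with
  | 0 => u = v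
  | k'.+1 => inball k' v u \/ exists w, inball k' v w /\ adj w u
  end.

Definition ball (k : nat) (v : V) : set V := [set u | inball k v u].

Definition is_gdist (v u : V) (n : nat) : Prop :=
  inball n v u /\ forall m, inball m v u -> (n <= m)%N.

Definition graph_ok : Prop :=
  symmetric adj /\
  (forall v, finite_set [set u | adj v u]) /\
  (forall u v, exists n, inball n u v).

(* p is the parent map of a BFS spanning tree rooted at r:
   every v <> r is joined by an edge of G to its parent, which is one level
   closer to r (so d_T(r,v) = d_G(r,v)). *)
Definition bfs_parent (r : V) (p : V -> V) : Prop :=
  forall v, v <> r ->
    adj (p v) v /\ forall n, is_gdist r (p v) n -> is_gdist r v n.+1.

Definition vol (v : V) (k : nat) : nat := #|` fset_set (ball k v)|.

Definition volR {R : realType} (v : V) (x : R) : R :=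
  if x < 0 then 0 else (vol v (Num.truncn x))%:R.

(* Opinions: Some true = +1, Some false = -1, None = bot.
   The spread process driven by coins A t v (flip w.p. a) and B t v
   (adopt parent's opinion w.p. b), used at time step t for vertex v. *)
Fixpoint spread (r : V) (p : V -> V) (A B : nat -> V -> bool) (t : nat)
  : V -> option bool :=
  match t with
  | 0 => fun v => if v == r then Some true else None
  | t'.+1 => fun v =>
      let f := spread r p A B t' in
      if v == r then Some true else
      match f v, f (p v) with
      | None, Some s => Some (if A t v then ~~ s else s)
      | Some s, _ => if B t v then f (p v) else Some s
      | None, None => None
      end
  end.

Definition count_set (S : set V) : nat := #|` fset_set S|.

Definition bias (R : realType) (f : V -> option bool) : R :=
  ((count_set [set v | f v = Some true])%:R
   - (count_set [set v | f v = Some false])%:R)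
  / (count_set [set v | f v != None])%:R.

(* A, B : independent Bernoulli coins on a probability space:
   A t v ~ Ber(a), B t v ~ Ber(b), the whole family mutually independent
   (every finite-dimensional marginal is the product law). *)

Definition coin_family {R : realType} {d : measure_display}
  {T : measurableType d} (P : probability T R) (a b : R)
  (A B : nat -> V -> T -> bool) : Prop :=
  let X (i : nat * V * bool) := if i.2 then B i.1.1 i.1.2 else A i.1.1 i.1.2 in
  let q (i : nat * V * bool) := if i.2 then b else a in
  (forall i, measurable [set w | X i w]) /\
  (forall (s : seq (nat * V * bool)) (e : nat * V * bool -> bool), uniq s ->
     P (\bigcap_(i in [set` s]) [set w | X i w = e i])
     = (\prod_(i <- s) (if e i then q i else 1 - q i))%:E).

Definition lambda {R : realType} {d : measure_display} {T : measurableType d}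
  (r : V) (p : V -> V) (A B : nat -> V -> T -> bool) (t : nat) (w : T) : R :=
  bias R (spread r p (fun s v => A s v w) (fun s v => B s v w) t).

End Graph.

From Pilot Require Import Defs.
From HB Require Import structures.
From mathcomp Require Import all_boot all_order all_algebra.
From mathcomp Require Import all_classical all_reals all_analysis.
From mathcomp Require Import measurable_realfun finmap.
From mathcomp Require Import ring lra.
Set Implicit Arguments. Unset Strict Implicit. Unset Printing Implicit Defensive.
Import Order.TTheory GRing.Theory Num.Theory.
Local Open Scope classical_set_scope.
Local Open Scope ring_scope.

(* The expected sign of the opinion of a vertex at distance [k] from the root
   at time [t] depends only on [t] and [k]; call it [sign_mean t k].  It is
   computed exactly: an opinion depends on finitely many coins, and the
   expectation over independent coins is a finite recursion [coin_expect].
   Hence [E lambda(t)] is the average of [sign_mean t (dist v)] over the ball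
   of radius [t].  Comparing recursions, [sign_mean (t + 1) k] is at least
   [P(Bin(t, b) >= k)] and [sign_mean t k] is at most
   [P(Bin(t, b) >= k - m) + (1 - 2a)^m]; with [s = t^(1/4)], Chernoff bounds
   make it [exp(-s^2)]-close to [1] for [k <= b t - K s^3] and to [0] for
   [k > b t + K s^3], where [K = 3 + 2 / a]. *)

Section CoinExpectation.
Variables (R : realType) (I : eqType) (q : I -> R).

Definition set_coin (x : I -> bool) (i : I) (c : bool) : I -> bool :=
  fun j => if j == i then c else x j.

(* The expectation of [g] when the coins listed in [s] are independent with
   [P(coin i) = q i]; the coins outside [s] are frozen to [false]. *)
Fixpoint coin_expect (s : seq I) (g : (I -> bool) -> R) : R :=
  if s is i :: s' then
    q i * coin_expect s' (fun x => g (set_coin x i true))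
    + (1 - q i) * coin_expect s' (fun x => g (set_coin x i false))
  else g (fun _ => false).

Definition depends_on (U : Type) (s : seq I) (g : (I -> bool) -> U) :=
  forall x y, {in s, x =1 y} -> g x = g y.

Lemma depends_on_set_coin (U : Type) s i c (g : (I -> bool) -> U) :
  depends_on (i :: s) g -> depends_on s (fun x => g (set_coin x i c)).
Proof.
move=> dg x y xy; apply: dg => j; rewrite inE /set_coin.
by case: eqP => // _ /= /xy.
Qed.

Lemma set_coin_id (x : I -> bool) i : set_coin x i (x i) = x.
Proof. by apply: funext => j; rewrite /set_coin; case: eqP => // ->. Qed.

Lemma eq_coin_expect s f g : f =1 g -> coin_expect s f = coin_expect s g.
Proof. by move=> /funext ->. Qed.

Lemma coin_expectD s f g :
  coin_expect s (fun x => f x + g x) = coin_expect s f + coin_expect s g.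
Proof. by elim: s f g => [//|i s IH] f g /=; rewrite !IH; ring. Qed.

Lemma coin_expectZ s c f :
  coin_expect s (fun x => c * f x) = c * coin_expect s f.
Proof. by elim: s f => [//|i s IH] f /=; rewrite !IH; ring. Qed.

Lemma coin_expect_cst s c : coin_expect s (fun _ => c) = c.
Proof. by elim: s => [//|i s IH] /=; rewrite IH; ring. Qed.

Lemma coin_expect_sum (U : Type) (r : seq U) s (F : U -> (I -> bool) -> R) :
  coin_expect s (fun x => \sum_(u <- r) F u x) = \sum_(u <- r) coin_expect s (F u).
Proof.
elim: r => [|u r IH]; first by under eq_fun do rewrite big_nil; rewrite coin_expect_cst big_nil.
by under eq_fun do rewrite big_cons; rewrite coin_expectD IH big_cons.
Qed.

End CoinExpectation.

Section CoinIntegral.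
Variables (R : realType) (I : eqType) (q : I -> R).
Variables (d : measure_display) (T : measurableType d) (P : probability T R).
Variable X : I -> T -> bool.
Hypothesis X_measurable : forall i, measurable [set w | X i w].
Hypothesis X_independent : forall (s : seq I) (e : I -> bool), uniq s ->
  P (\bigcap_(i in [set` s]) [set w | X i w = e i])
  = (\prod_(i <- s) (if e i then q i else 1 - q i))%:E.

Local Notation weight s e := (\prod_(i <- s) (if e i then q i else 1 - q i)).

Definition cylinder (s : seq I) (e : I -> bool) : set T :=
  \bigcap_(i in [set` s]) [set w | X i w = e i].

Lemma cylinder_nil e : cylinder [::] e = setT.
Proof. by apply/seteqP; split => w //= _ j. Qed.

Lemma cylinder_cons i s e :
  cylinder (i :: s) e = [set w | X i w = e i] `&` cylinder s e.
Proof.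
apply/seteqP; split => w.
  move=> h; split; first by apply: h; rewrite /= inE eqxx.
  by move=> j js; apply: h; rewrite /= inE js orbT.
by move=> [h1 h2] j; rewrite /= inE => /orP[/eqP->//|js]; exact: h2.
Qed.

Lemma cylinder_set_coin s e i c : i \notin s -> cylinder s (set_coin e i c) = cylinder s e.
Proof.
move=> si; apply: eq_bigcapr => j /= js; rewrite /set_coin ifF //.
by apply: contraNF si => /eqP <-.
Qed.

Lemma cylinder_split s e i : i \notin s ->
  cylinder s e = cylinder (i :: s) (set_coin e i true) `|` cylinder (i :: s) (set_coin e i false).
Proof.
move=> si; rewrite !cylinder_cons !cylinder_set_coin // /set_coin eqxx.
apply/seteqP; split => [w h|w [] [] //].
by case Xw: (X i w); [left|right].
Qed.

Lemma weight_set_coin s e i c : i \notin s ->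
  weight (i :: s) (set_coin e i c) = (if c then q i else 1 - q i) * weight s e.
Proof.
move=> si; rewrite big_cons /set_coin eqxx; congr (_ * _); apply: eq_big_seq => j js.
by have /negbTE -> : j != i by apply: contraNneq si => <-.
Qed.

Lemma measurable_coin i c : measurable [set w | X i w = c].
Proof.
case: c; first by rewrite (_ : [set w | _] = [set w | X i w]) //; apply/seteqP; split.
rewrite (_ : [set w | _] = ~` [set w | X i w]); first exact: measurableC.
by apply/seteqP; split => w /=; [move=> -> | move/negP/negbTE].
Qed.

Lemma measurable_cylinder s e : measurable (cylinder s e).
Proof.
elim: s => [|i s IH]; first by rewrite cylinder_nil.
by rewrite cylinder_cons; apply: measurableI => //; exact: measurable_coin.
Qed.

Lemma measurable_fun_coins s (g : (I -> bool) -> R) : depends_on s g ->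
  measurable_fun setT ((fun w => (g (X^~ w))%:E) : T -> \bar R).
Proof.
elim: s g => [|i s IH] g dg.
  rewrite (_ : (fun w => _) = cst (g (fun _ => false))%:E); first exact: measurable_cst.
  by apply: funext => w; congr (_%:E); apply: dg.
rewrite (_ : (fun w => _) = fun w => if X i w then (g (set_coin (X^~ w) i true))%:E
                                     else (g (set_coin (X^~ w) i false))%:E); last first.
  by apply: funext => w; rewrite -{1}(set_coin_id (X^~ w) i); case: (X i w).
apply: measurable_fun_ifT; last 2 first.
- by apply: (IH (fun x => g (set_coin x i true))); apply: depends_on_set_coin.
- by apply: (IH (fun x => g (set_coin x i false))); apply: depends_on_set_coin.
by apply: (measurable_fun_bool true); rewrite setTI; exact: X_measurable.
Qed.

Lemma integral_cylinder s (g : (I -> bool) -> R) s' e :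
  uniq s -> uniq s' -> {in s, forall j, j \notin s'} -> depends_on s g ->
  (\int[P]_(w in cylinder s' e) (g (X^~ w))%:E = (weight s' e * coin_expect q s g)%:E)%E.
Proof.
elim: s g s' e => [|i s IH] g s' e us us' ss' dg.
  rewrite (eq_integral (fun=> (g (fun _ => false))%:E)) => [|w _]; last first.
    by congr (_%:E); apply: dg.
  rewrite integral_cst; last exact: measurable_cylinder.
  by rewrite mulrC EFinM; congr (_ * _)%E; exact: X_independent.
move: us => /= /andP[si us]; have si' : i \notin s' by apply: ss'; rewrite inE eqxx.
have branch c : (\int[P]_(w in cylinder (i :: s') (set_coin e i c)) (g (X^~ w))%:E
    = (weight s' e * ((if c then q i else 1 - q i) *
                      coin_expect q s (fun x => g (set_coin x i c))))%:E)%E.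
  rewrite (eq_integral (fun w => (g (set_coin (X^~ w) i c))%:E)) => [|w /set_mem].
    rewrite (IH (fun x => g (set_coin x i c))) ?weight_set_coin //=; first by rewrite mulrCA mulrA.
    - by rewrite si' us'.
    - move=> j js; rewrite inE negb_or ss' ?inE ?js ?orbT // andbT.
      by apply: contraNneq si => <-.
    - exact: depends_on_set_coin.
  rewrite cylinder_cons => -[/= Xiw _].
  by rewrite -{1}(set_coin_id (X^~ w) i) Xiw /set_coin eqxx.
rewrite (cylinder_split e si') integral_setU; try exact: measurable_cylinder.
- by rewrite !branch -EFinD /=; congr (_%:E); ring.
- by apply: (measurable_funS measurableT) => //; exact: measurable_fun_coins dg.
rewrite !cylinder_cons /set_coin eqxx; apply/disj_setPS => w [[/= h1 _] [/= h2 _]].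
by rewrite h1 in h2.
Qed.

Lemma expectation_coins s (g : (I -> bool) -> R) : uniq s -> depends_on s g ->
  (\int[P]_w (g (X^~ w))%:E = (coin_expect q s g)%:E)%E.
Proof.
move=> us dg; rewrite -(cylinder_nil (fun _ => false)).
by rewrite (@integral_cylinder s g [::]) ?big_nil ?mul1r.
Qed.

(* A combinatorial identity, derived here from the integral representation. *)
Lemma coin_expect_support s s' (g : (I -> bool) -> R) : uniq s -> uniq s' ->
  depends_on s g -> depends_on s' g -> coin_expect q s g = coin_expect q s' g.
Proof.
move=> us us' dg dg'; apply/eqP; rewrite -(eqe (coin_expect q s g)).
by rewrite -(expectation_coins us dg) (expectation_coins us' dg').
Qed.

End CoinIntegral.

Section Distance.
Variables (V : countType) (adj : rel V) (r : V).
Hypothesis connected : forall v, exists n, inball adj n r v.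

Lemma inball_le k k' u v : (k <= k')%N -> inball adj k u v -> inball adj k' u v.
Proof.
elim: k' => [|k' IH]; first by rewrite leqn0 => /eqP->.
by rewrite leq_eqVlt => /orP[/eqP->//|/IH kv /kv]; left.
Qed.

Let ex_dist v : exists n, `[< inball adj n r v >].
Proof. by have [n h] := connected v; exists n; apply/asboolP. Qed.

Definition dist v : nat := ex_minn (ex_dist v).

Lemma distP v : is_gdist adj r v (dist v).
Proof.
rewrite /dist; case: ex_minnP => n /asboolP vn minn; split => // m vm.
by apply: minn; apply/asboolP.
Qed.

Lemma is_gdist_dist v n : is_gdist adj r v n -> dist v = n.
Proof.
by move=> [vn minn]; have [vd mind] := distP v; apply/eqP; rewrite eqn_leq mind ?minn.
Qed.

Lemma inball_dist k v : inball adj k r v <-> (dist v <= k)%N.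
Proof. by split=> [/(distP v).2 // | kd]; exact: inball_le kd (distP v).1. Qed.

Lemma dist_eq0 v : (dist v == 0)%N = (v == r).
Proof.
apply/idP/eqP => [/eqP d0 | ->]; first by have := (distP v).1; rewrite d0.
by rewrite -leqn0; apply/inball_dist.
Qed.

Lemma dist_root : dist r = 0%N.
Proof. by apply/eqP; rewrite dist_eq0. Qed.

End Distance.

Definition sign {R : realType} (o : option bool) : R :=
  match o with Some true => 1 | Some false => -1 | None => 0 end.

Section SpreadCoins.
Variables (V : countType) (adj : rel V) (r : V) (p : V -> V).
Hypotheses (connected : forall v, exists n, inball adj n r v)
  (p_bfs : bfs_parent adj r p).
Local Notation dist := (dist connected).

Definition spread_coins (x : nat * V * bool -> bool) (t : nat) : V -> option bool :=
  spread r p (fun s v => x (s, v, false)) (fun s v => x (s, v, true)) t.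

Lemma dist_parent v : v != r -> dist v = (dist (p v)).+1.
Proof. by move=> /eqP vr; apply: is_gdist_dist; apply: (p_bfs vr).2; exact: distP. Qed.

Lemma spread_coins_defined x t v : (spread_coins x t v != None) = (dist v <= t)%N.
Proof.
elim: t v => [|t IH] v.
  by rewrite leqn0 dist_eq0 /spread_coins /=; case: (v == r).
rewrite /spread_coins /=; case: (eqVneq v r) => [->|vr].
  by rewrite dist_root.
have := IH v; have := IH (p v); rewrite /spread_coins (dist_parent vr) ltnS.
case: (spread _ _ _ _ t v) => [s|]; case: (spread _ _ _ _ t (p v)) => [s'|] //=.
- by case: (x _).
- by move=> pv /esym/ltnW; rewrite -pv.
Qed.

Fixpoint coin_support (t : nat) (v : V) : seq (nat * V * bool) :=
  if t is t'.+1 then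
    (t'.+1, v, true) :: (t'.+1, v, false) :: (coin_support t' v ++ coin_support t' (p v))
  else [::].

Lemma coin_support_time t v i : i \in coin_support t v -> (i.1.1 <= t)%N.
Proof.
elim: t v => [//|t IH] v; rewrite /= !inE mem_cat.
by case/orP=> [/eqP->//|/orP[/eqP->//|/orP[]/IH/leq_trans->]].
Qed.

Lemma depends_on_spread t v : depends_on (coin_support t v) (fun x => spread_coins x t v).
Proof.
elim: t v => [//|t IH] v x y xy; rewrite /spread_coins /=.
rewrite -!/(spread_coins _ t _) (IH v x y) => [|i it].
  rewrite (IH (p v) x y) => [|i it]; last by apply: xy; rewrite !inE mem_cat it !orbT.
  by rewrite !xy // !inE eqxx ?orbT.
by apply: xy; rewrite !inE mem_cat it !orbT.
Qed.

Lemma spread_coins_set_future x i c t v : (t < i.1.1)%N ->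
  spread_coins (set_coin x i c) t v = spread_coins x t v.
Proof.
move=> ti; apply: depends_on_spread => j /coin_support_time jt.
by rewrite /set_coin; case: eqP => // ji; move: ti; rewrite -ji ltnNge jt.
Qed.

Lemma sign_spread_coinsS (R : realType) x t v : v != r ->
  sign (spread_coins x t.+1 v) =
  (if (dist v <= t)%N then
     (if x (t.+1, v, true) then sign (spread_coins x t (p v)) else sign (spread_coins x t v))
   else if dist v == t.+1 then
     (if x (t.+1, v, false) then -1 else 1) * sign (spread_coins x t (p v))
   else 0 :> R).
Proof.
move=> vr; rewrite /spread_coins /= (negbTE vr) -!/(spread_coins _ t _).
have := spread_coins_defined x t v; have := spread_coins_defined x t (p v).
rewrite (dist_parent vr) eqSS.
case: (spread_coins x t v) => [s|]; case: (spread_coins x t (p v)) => [s'|] /= pv vv.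
- by rewrite -vv; case: (x _).
- by move: vv => /esym/ltnW; rewrite -pv.
- rewrite -vv /= eqn_leq -pv leqNgt -vv /=.
  by case: (x _); case: s' => /=; rewrite ?mulN1r ?mul1r ?opprK.
- by rewrite -vv /= eqn_leq -pv.
Qed.

End SpreadCoins.

Section SignMean.
Variables (R : realType) (a b : R).

(* The expected sign of the opinion at time [t] of a vertex at distance [k]: it
   is [0] before time [k]; at time [k] the vertex takes its parent's opinion,
   flipped with probability [a]; afterwards it copies its parent's opinion with
   probability [b] at each step. *)
Fixpoint sign_mean (t k : nat) : R :=
  match t, k with
  | 0, _ => (k == 0)%:R
  | t'.+1, 0 => 1
  | t'.+1, k'.+1 =>
    if k' == t' then (1 - 2 * a) * sign_mean t' k'
    else b * sign_mean t' k' + (1 - b) * sign_mean t' k'.+1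
  end.

Lemma sign_meanSS t k : sign_mean t.+1 k.+1 =
  if k == t then (1 - 2 * a) * sign_mean t k
  else b * sign_mean t k + (1 - b) * sign_mean t k.+1.
Proof. by []. Qed.

Lemma sign_mean_far t k : (t < k)%N -> sign_mean t k = 0.
Proof.
elim: t k => [|t IH] [|k] //; rewrite ltnS => tk.
rewrite sign_meanSS ifF ?IH ?mulr0 ?addr0 // ?ltnS ?(ltnW tk) //.
by apply/negbTE; rewrite neq_ltn tk orbT.
Qed.

End SignMean.

Section ExpectedSign.
Variables (R : realType) (a b : R) (V : countType) (adj : rel V) (r : V) (p : V -> V).
Hypotheses (connected : forall v, exists n, inball adj n r v)
  (p_bfs : bfs_parent adj r p).
Local Notation dist := (dist connected).
Local Notation spread_coins := (spread_coins r p).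
Local Notation coin_support := (coin_support p).

Definition coin_prob (i : nat * V * bool) : R := if i.2 then b else a.

Variables (d : measure_display) (T : measurableType d) (P : probability T R)
  (A B : nat -> V -> T -> bool).
Hypothesis coins : coin_family P a b A B.

Definition coin_value (i : nat * V * bool) : T -> bool :=
  if i.2 then B i.1.1 i.1.2 else A i.1.1 i.1.2.

Lemma coin_expect_family s (g : (nat * V * bool -> bool) -> R) :
  uniq s -> depends_on s g ->
  (\int[P]_w (g (coin_value^~ w))%:E = (coin_expect coin_prob s g)%:E)%E.
Proof. exact: (expectation_coins coins.1 coins.2). Qed.

Lemma coin_support_step t v :
  undup (coin_support t.+1 v) =
  (t.+1, v, true) :: (t.+1, v, false) :: undup (coin_support t v ++ coin_support t (p v)).
Proof.
have past i : i \in coin_support t v ++ coin_support t (p v) -> (i.1.1 <= t)%N.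
  by rewrite mem_cat => /orP[] /coin_support_time.
rewrite /= !ifN //; apply/negP; first by move/past; rewrite ltnn.
by rewrite inE => /orP[/eqP[] // | /past]; rewrite /= ltnn.
Qed.

Lemma depends_on_sign_spread S t v : {subset coin_support t v <= S} ->
  depends_on S (fun x => sign (spread_coins x t v) : R).
Proof. by move=> vS x y xy; congr sign; apply: depends_on_spread => i /vS /xy. Qed.

Lemma expected_sign t v S : uniq S -> {subset coin_support t v <= S} ->
  coin_expect coin_prob S (fun x => sign (spread_coins x t v)) = sign_mean a b t (dist v).
Proof.
elim: t v S => [|t IH] v S uS vS.
  rewrite (eq_coin_expect _ _ (g := fun _ => sign (if v == r then Some true else None))) //.
  by rewrite coin_expect_cst /= (dist_eq0 connected); case: (v == r).
rewrite (coin_expect_support coins.1 coins.2 uS (undup_uniq (coin_support t.+1 v)));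
  last 2 first.
- exact: depends_on_sign_spread.
- by apply: depends_on_sign_spread => i; rewrite mem_undup.
case: (eqVneq v r) => [->|vr].
  rewrite (eq_coin_expect _ _ (g := fun _ => 1)) ?coin_expect_cst.
    by rewrite dist_root.
  by move=> x; rewrite /spread_coins /= eqxx.
set S' := undup (coin_support t v ++ coin_support t (p v)).
have IHS u : u \in [:: v; p v] ->
    coin_expect coin_prob S' (fun x => sign (spread_coins x t u)) = sign_mean a b t (dist u).
  rewrite !inE => uv; apply: IH; rewrite ?undup_uniq // => i iu.
  by rewrite mem_undup mem_cat; case/orP: uv => /eqP <-; rewrite iu ?orbT.
(* The two coins of [v] at step [t + 1] are not seen by the process up to time [t]. *)
have step be ga : (fun x => sign (spread_coins
      (set_coin (set_coin x (t.+1, v, false) ga) (t.+1, v, true) be) t.+1 v)) =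
    fun x => if (dist v <= t)%N then
      (if be then sign (spread_coins x t (p v)) else sign (spread_coins x t v))
    else if dist v == t.+1 then (if ga then -1 else 1) * sign (spread_coins x t (p v))
    else 0 :> R.
  apply: funext => x; rewrite (sign_spread_coinsS connected p_bfs) //.
  by rewrite !spread_coins_set_future //= /set_coin !xpair_eqE !eqxx.
rewrite coin_support_step /= !step.
have IHv := IHS v (mem_head _ _); have IHp := IHS (p v) (mem_last _ [:: p v]).
rewrite (dist_parent connected p_bfs vr) eqSS in IHv *.
case: (ltngtP (dist (p v)) t) => kt; rewrite ?coin_expect_cst ?coin_expectZ ?IHv ?IHp.
all: rewrite /coin_prob /=.
- ring.
- by rewrite !sign_mean_far ?ltnS ?(ltnW kt) //; ring.
- ring.
Qed.

End ExpectedSign.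

Lemma sum_sign (R : realType) (V : Type) (f : V -> option bool) (s : seq V) :
  \sum_(v <- s) (sign (f v) : R) =
  (count (fun v => f v == Some true) s)%:R - (count (fun v => f v == Some false) s)%:R.
Proof.
elim: s => [|v s IH]; first by rewrite big_nil subrr.
by rewrite big_cons IH /= !natrD; case: (f v) => [[]|] /=; ring.
Qed.

Section Balls.
Variables (V : countType) (adj : rel V) (r : V).
Hypotheses (locally_finite : forall v, finite_set [set u | adj v u])
  (connected : forall v, exists n, inball adj n r v).
Local Notation dist := (dist connected).

Lemma finite_ball k : finite_set (Defs.ball adj k r).
Proof.
elim: k => [|k IH].
  by apply: sub_finite_set (finite_set1 r) => u /= ->.
apply: (sub_finite_set
  (B := Defs.ball adj k r `|` \bigcup_(w in Defs.ball adj k r) [set u | adj w u])).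
  move=> u /= [kv|[w [kw wu]]]; [left; exact: kv | right; exists w => //].
by rewrite finite_setU; split => //; apply: bigcup_finite.
Qed.

Lemma mem_ball k v : (v \in fset_set (Defs.ball adj k r)) = (dist v <= k)%N.
Proof.
rewrite in_fset_set; last exact: finite_ball.
by apply/idP/idP => [/set_mem/(inball_dist connected) | /(inball_dist connected)/mem_set].
Qed.

Lemma count_set_ball k (S : set V) : S `<=` Defs.ball adj k r ->
  count_set S = count (fun v => `[< S v >]) (fset_set (Defs.ball adj k r)).
Proof.
move=> Sk; have finS := sub_finite_set Sk (finite_ball k).
rewrite /count_set (_ : fset_set S =
  [fset v in [seq v <- fset_set (Defs.ball adj k r) | `[< S v >]]]%fset).
  by rewrite card_fseq undup_id ?filter_uniq ?fset_uniq // size_filter.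
apply/fsetP => v; rewrite in_fset_set // inE mem_filter (in_fset_set (finite_ball k)).
apply/idP/andP => [/set_mem Sv | [/asboolP Sv _]]; last exact: mem_set.
by split; [exact/asboolP | exact/mem_set/Sk].
Qed.

Lemma vol_count k k' : (k <= k')%N ->
  vol adj r k = count (fun v => dist v <= k)%N (fset_set (Defs.ball adj k' r)).
Proof.
move=> kk; rewrite /vol -/(count_set _) (count_set_ball (k := k')).
  by apply: eq_count => v; apply/asboolP/idP => /(inball_dist connected).
by move=> v /(inball_dist connected) vk; apply/(inball_dist connected); exact: leq_trans kk.
Qed.

End Balls.

Section ExpectedBias.
Variables (R : realType) (a b : R) (V : countType) (adj : rel V) (r : V) (p : V -> V).
Hypotheses (G_ok : graph_ok adj) (p_bfs : bfs_parent adj r p).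
Let connected := G_ok.2.2 r.
Local Notation dist := (dist connected).
Local Notation spread_coins := (spread_coins r p).
Local Notation ball_seq t := (fset_set (Defs.ball adj t r)).

Lemma bias_spread_coins x t : bias R (spread_coins x t) =
  (\sum_(v <- ball_seq t) sign (spread_coins x t v)) / (vol adj r t)%:R.
Proof.
have sub (S : set V) : S `<=` [set v | spread_coins x t v != None] -> S `<=` Defs.ball adj t r.
  by move=> St v /St /=; rewrite (spread_coins_defined connected p_bfs) => /(inball_dist connected).
rewrite /bias sum_sign (vol_count G_ok.2.1 connected (leqnn t)).
rewrite !(count_set_ball (r := r) G_ok.2.1 (k := t)); last 3 first.
- exact: sub.
- by apply: sub => v /= ->.
- by apply: sub => v /= ->.
congr ((_%:R - _%:R) / _%:R); apply: eq_in_count => v; last first.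
  rewrite (mem_ball G_ok.2.1 connected) => vt; rewrite vt.
  by apply/asboolP; rewrite /= (spread_coins_defined connected p_bfs).
all: by move=> _; apply/asboolP/eqP.
Qed.

Variables (d : measure_display) (T : measurableType d) (P : probability T R)
  (A B : nat -> V -> T -> bool).
Hypothesis coins : coin_family P a b A B.

Lemma expected_lambda t : (\int[P]_w (lambda r p A B t w)%:E =
  ((\sum_(v <- ball_seq t) sign_mean a b t (dist v)) / (vol adj r t)%:R)%:E)%E.
Proof.
set S := undup (flatten [seq coin_support p t v | v <- ball_seq t]).
have supp v : v \in ball_seq t -> {subset coin_support p t v <= S}.
  by move=> vt i iv; rewrite mem_undup; apply/flatten_mapP; exists v.
have far x v : (t < dist v)%N -> spread_coins x t v = None.
  by move=> tv; apply/eqP; rewrite -[_ == _]negbK (spread_coins_defined connected p_bfs) -ltnNge.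
have dep : depends_on S (fun x => bias R (spread_coins x t)).
  move=> x y xy; congr (bias R _); apply: funext => v.
  have [vt | tv] := leqP (dist v) t; last by rewrite !far.
  apply: depends_on_spread => i iv; apply: xy; apply: (supp v) iv.
  by rewrite (mem_ball G_ok.2.1 connected).
rewrite (coin_expect_family coins (undup_uniq _) dep) (eq_coin_expect _ _ (bias_spread_coins^~ t)).
under eq_coin_expect do rewrite mulrC.
rewrite coin_expectZ coin_expect_sum mulrC; congr ((_ / _)%:E).
apply: eq_big_seq => v vt.
by rewrite (expected_sign connected p_bfs coins (undup_uniq _) (supp v vt)).
Qed.

End ExpectedBias.

Section BinomialTail.
Variables (R : realType) (b : R).
Hypotheses (b_ge0 : 0 <= b) (b_le1 : b <= 1).

(* [binom_tail n k] is [P(Bin(n, b) >= k)]. *)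
Fixpoint binom_tail (n k : nat) : R :=
  match n, k with
  | 0, _ => (k == 0)%:R
  | n'.+1, 0 => 1
  | n'.+1, k'.+1 => b * binom_tail n' k' + (1 - b) * binom_tail n' k'.+1
  end.

Lemma binom_tailSS n k :
  binom_tail n.+1 k.+1 = b * binom_tail n k + (1 - b) * binom_tail n k.+1.
Proof. by []. Qed.

Lemma binom_tail0 n : binom_tail n 0 = 1. Proof. by case: n. Qed.

Lemma binom_tail_ge0 n k : 0 <= binom_tail n k.
Proof. by elim: n k => [|n IH] [|k] //=; rewrite addr_ge0 ?mulr_ge0 ?subr_ge0. Qed.

Lemma binom_tail_far n k : (n < k)%N -> binom_tail n k = 0.
Proof. by elim: n k => [|n IH] [|k] //= nk; rewrite !IH ?mulr0 ?addr0 // ltnW. Qed.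

(* Chernoff: [P(X < k) <= z^k E[z^-X]] for [X ~ Bin(n, b)] and [z >= 1]. *)
Lemma binom_tail_compl_chernoff z n k : 1 <= z ->
  1 - binom_tail n k <= z ^+ k * (1 - b + b / z) ^+ n.
Proof.
move=> z1; have M0 : 0 <= 1 - b + b / z.
  by rewrite addr_ge0 ?subr_ge0 // divr_ge0 // (le_trans ler01).
elim: n k => [|n IH] [|k] /=.
- by rewrite subrr expr0 mulr1.
- by rewrite subr0 expr0 mulr1 exprn_ege1.
- by rewrite subrr mulr_ge0 // exprn_ge0.
have -> : 1 - (b * binom_tail n k + (1 - b) * binom_tail n k.+1) =
  b * (1 - binom_tail n k) + (1 - b) * (1 - binom_tail n k.+1) by ring.
have -> : z ^+ k.+1 * (1 - b + b / z) ^+ n.+1 =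
    b * (z ^+ k * (1 - b + b / z) ^+ n) + (1 - b) * (z ^+ k.+1 * (1 - b + b / z) ^+ n).
  by rewrite !exprS; field; rewrite gt_eqF // (lt_le_trans ltr01).
by rewrite lerD // ler_wpM2l ?subr_ge0.
Qed.

(* Markov: [P(X >= k) y^k <= E[y^X]] for [X ~ Bin(n, b)] and [y >= 1]. *)
Lemma binom_tail_chernoff y n k : 1 <= y ->
  binom_tail n k * y ^+ k <= (1 - b + b * y) ^+ n.
Proof.
move=> y1; have M1 : 1 <= 1 - b + b * y.
  have : 0 <= b * (y - 1) by rewrite mulr_ge0 // subr_ge0.
  lra.
elim: n k => [|n IH] [|k] /=.
- by rewrite !expr0 mulr1.
- by rewrite mul0r expr0.
- by rewrite expr0 mulr1 exprn_ege1.
have -> : (b * binom_tail n k + (1 - b) * binom_tail n k.+1) * y ^+ k.+1 =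
    (b * y) * (binom_tail n k * y ^+ k) + (1 - b) * (binom_tail n k.+1 * y ^+ k.+1).
  by rewrite exprS; ring.
have -> : (1 - b + b * y) ^+ n.+1 =
    (b * y) * (1 - b + b * y) ^+ n + (1 - b) * (1 - b + b * y) ^+ n.
  by rewrite exprS; ring.
by rewrite lerD // ler_wpM2l ?subr_ge0 ?mulr_ge0 // (le_trans ler01).
Qed.

End BinomialTail.

Section SignMeanBounds.
Variables (R : realType) (a b : R).
Hypotheses (a_ge0 : 0 <= a) (a_le : a <= 1 / 2) (b_ge0 : 0 <= b) (b_le1 : b <= 1).
Local Notation sign_mean := (sign_mean a b).
Local Notation binom_tail := (binom_tail b).
Local Notation q := (1 - 2 * a).

Let q_ge0 : 0 <= q. Proof. by move: a_le; lra. Qed.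
Let q_le1 : q <= 1. Proof. by move: a_ge0; lra. Qed.

Lemma sign_mean_ge0 t k : 0 <= sign_mean t k.
Proof.
elim: t k => [|t IH] [|k] //=.
case: eqP => _; first exact: mulr_ge0 q_ge0 (IH k).
by rewrite addr_ge0 ?mulr_ge0 ?subr_ge0 ?IH.
Qed.

Lemma sign_mean_le1 t k : sign_mean t k <= 1.
Proof.
elim: t k => [|t IH] [|k] //=.
case: eqP => _; first by rewrite mulr_ile1 ?sign_mean_ge0.
apply: le_trans (_ : b * 1 + (1 - b) * 1 <= 1); last lra.
by rewrite lerD // ler_wpM2l ?subr_ge0.
Qed.

Lemma sign_mean_diag t : sign_mean t t = q ^+ t.
Proof. by elim: t => [|t IH] //=; rewrite eqxx IH exprS. Qed.

Lemma binom_tail_le_sign_mean t k : binom_tail t k <= sign_mean t.+1 k.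
Proof.
elim: t k => [|t IH] [|k]; rewrite ?binom_tail0 //.
- by rewrite binom_tail_far ?sign_mean_ge0.
rewrite binom_tailSS sign_meanSS; case: eqP => [kt|_]; last by rewrite lerD // ler_wpM2l ?subr_ge0.
by rewrite kt !binom_tail_far // !mulr0 addr0 mulr_ge0 // sign_mean_ge0.
Qed.

Lemma sign_mean_le_binom_tail m t k :
  sign_mean t k <= binom_tail t (k - m) + q ^+ m.
Proof.
have qm0 := exprn_ge0 m q_ge0.
elim: t k => [|t IH] k.
  by case: k => [|k] /=; rewrite ?sub0n ?lerDl ?addr_ge0 ?binom_tail_ge0.
have [km | mk] := leqP k m.
  rewrite (eqP (_ : k - m == 0)%N) ?subn_eq0 // binom_tail0.
  by rewrite -[_ t.+1 k]addr0 lerD ?sign_mean_le1.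
case: k mk => [//|k] mk; rewrite ltnS in mk; rewrite sign_meanSS subSn //.
case: eqP => [kt | _].
  rewrite kt sign_mean_diag -exprS; apply: ler_wpDl; first exact: binom_tail_ge0.
  by apply: ler_wiXn2l; rewrite // -kt; apply: leqW.
rewrite binom_tailSS.
have := IH k.+1; rewrite subSn // => IHk1.
rewrite (_ : _ + q ^+ m = b * (binom_tail t (k - m) + q ^+ m)
                          + (1 - b) * (binom_tail t (k - m).+1 + q ^+ m)); last by ring.
by rewrite lerD // ler_wpM2l ?subr_ge0.
Qed.

End SignMeanBounds.

Lemma pow_le_expR (R : realType) (u x : R) n :
  0 <= u -> u <= expR x -> u ^+ n <= expR (n%:R * x).
Proof. by move=> u0 ux; rewrite expRM_natl lerXn2r ?nnegrE ?expR_ge0. Qed.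

Section BinomialTailEstimates.
Variable R : realType.

(* Chernoff with [z = 1 + 1/s], for [n + 1 = s^4] trials. *)
Lemma binom_tail_compl_le_expR (b s K : R) n k : 0 <= b -> b <= 1 -> 1 <= s -> 2 <= K ->
  s ^+ 4 = n.+1%:R -> k%:R <= b * s ^+ 4 - K * s ^+ 3 ->
  1 - binom_tail b n k <= expR (- s ^+ 2).
Proof.
move=> b0 b1 s1 K2 sn kb; have s0 : 0 < s by lra.
have si0 : 0 <= s^-1 by rewrite invr_ge0 ltW.
have bs0 : 0 <= b / (s + 1) by rewrite divr_ge0 //; lra.
have bs1 : b / (s + 1) <= 1 by rewrite ler_pdivrMr; lra.
have := binom_tail_compl_chernoff b0 b1 n k (_ : 1 <= 1 + s^-1).
rewrite (_ : 1 - b + b / (1 + s^-1) = 1 - b / (s + 1)); last first.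
  by field; rewrite !gt_eqF //; lra.
move=> /(_ _)/le_trans; apply; first lra.
have zk := pow_le_expR k (_ : 0 <= 1 + s^-1) (expR_ge1Dx s^-1).
have qn := pow_le_expR n (_ : 0 <= 1 - b / (s + 1)) (expR_ge1Dx (- (b / (s + 1)))).
apply: le_trans (ler_pM _ _ (zk _) (qn _)) _; rewrite ?exprn_ge0 //; try lra.
rewrite -expRD ler_expR.
have ks : k%:R * s^-1 <= b * s ^+ 3 - K * s ^+ 2.
  rewrite -[_ * s^-1]/(k%:R / s) ler_pdivrMr //.
  by rewrite (_ : _ * s = b * s ^+ 4 - K * s ^+ 3) //; ring.
have nb : n%:R * - (b / (s + 1)) = - (b * ((s - 1) * (s ^+ 2 + 1))).
  rewrite (_ : n%:R = s ^+ 4 - 1); first by field; lra.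
  by rewrite sn -addn1 natrD addrK.
have s2 : 1 <= s ^+ 2 by rewrite exprn_ege1.
have : b * s ^+ 2 <= s ^+ 2 by rewrite ler_piMl // (le_trans ler01).
have : b * s <= b * s ^+ 2 by rewrite ler_wpM2l // expr2 ler_peMl // ltW.
have : b <= b * s by rewrite ler_peMr.
have : 2 * s ^+ 2 <= K * s ^+ 2 by rewrite ler_wpM2r // (le_trans ler01).
rewrite nb; move: ks; rewrite !exprS expr0 !mulr1; nra.
Qed.

Lemma expR_inv_succ_le (s : R) : 0 < s -> expR (s + 1)^-1 <= 1 + s^-1.
Proof.
move=> s0; have w0 : 0 < 1 - (s + 1)^-1 by rewrite subr_gt0 invf_lt1 //; lra.
rewrite -(ler_pM2r w0) (_ : (1 + s^-1) * _ = 1); last by field; rewrite !gt_eqF //; lra.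
rewrite -[X in _ <= X](mulfV (lt0r_neq0 (expR_gt0 (s + 1)^-1))) ler_wpM2l ?expR_ge0 //.
by rewrite -expRN; apply: le_trans (expR_ge1Dx _); rewrite addrC.
Qed.

(* Markov with [y = 1 + 1/s], for [n = s^4] trials. *)
Lemma binom_tail_le_expR (b s : R) n j : 0 <= b -> b <= 1 -> 1 <= s ->
  s ^+ 4 = n%:R -> j%:R <= s ^+ 4 -> b * s ^+ 4 + 3 * s ^+ 3 < j%:R ->
  binom_tail b n j <= expR (- (2 * s ^+ 2)).
Proof.
move=> b0 b1 s1 sn js jb; have s0 : 0 < s by lra.
have y1 : 1 <= 1 + s^-1 by rewrite lerDl invr_ge0 ltW.
have := binom_tail_chernoff b0 b1 n j y1.
rewrite (_ : 1 - b + b * (1 + s^-1) = 1 + b / s); last by ring.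
move=> /le_trans /(_ (pow_le_expR n _ (expR_ge1Dx (b / s)))) markov.
have yj : expR (j%:R * (s + 1)^-1) <= (1 + s^-1) ^+ j.
  by rewrite expRM_natl lerXn2r ?nnegrE ?expR_ge0 ?expR_inv_succ_le //; lra.
have : binom_tail b n j <= expR (n%:R * (b / s)) / expR (j%:R * (s + 1)^-1).
  rewrite ler_pdivlMr ?expR_gt0 //; apply: le_trans (markov _); last first.
    by rewrite addr_ge0 ?divr_ge0 //; lra.
  by rewrite ler_wpM2l // binom_tail_ge0.
move/le_trans; apply; rewrite -expRB ler_expR -sn.
have -> : s ^+ 4 * (b / s) = b * s ^+ 3 by field; rewrite gt_eqF.
have -> : j%:R * (s + 1)^-1 = j%:R / s - j%:R / (s * (s + 1)).
  by field; rewrite !gt_eqF //; lra.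
have : j%:R / (s * (s + 1)) <= s ^+ 2.
  rewrite ler_pdivrMr; last by rewrite mulr_gt0 //; lra.
  rewrite (_ : s ^+ 2 * (s * (s + 1)) = s ^+ 4 + s ^+ 3); last by ring.
  by apply: le_trans js _; rewrite lerDl exprn_ge0 // ltW.
have : b * s ^+ 3 + 3 * s ^+ 2 < j%:R / s.
  by rewrite ltr_pdivlMr // (_ : _ * s = b * s ^+ 4 + 3 * s ^+ 3) //; ring.
lra.
Qed.

End BinomialTailEstimates.

Section SignMeanEstimates.
Variable R : realType.

Lemma sign_mean_lower_bound (a b s K : R) t k : a <= 1 / 2 -> 0 <= b -> b <= 1 ->
  1 <= s -> 2 <= K -> s ^+ 4 = t%:R -> k%:R <= b * t%:R - K * s ^+ 3 ->
  1 - expR (- s ^+ 2) <= sign_mean a b t k.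
Proof.
move=> a_le b_ge0 b_le1 s1 K2; case: t => [|n] st kb.
  by have := exprn_ege1 4 s1; rewrite st; lra.
apply: le_trans (binom_tail_le_sign_mean a_le b_ge0 b_le1 n k).
have := binom_tail_compl_le_expR b_ge0 b_le1 s1 K2 st; rewrite st => /(_ k kb).
lra.
Qed.

Lemma twice_expR_le (x : R) : 1 <= x -> 2 * expR (- (2 * x)) <= expR (- x).
Proof.
move=> x1; rewrite (_ : - x = - (2 * x) + x) ?expRD; last by ring.
rewrite mulrC ler_wpM2l ?expR_ge0 //; apply: le_trans (expR_ge1Dx x); lra.
Qed.

(* Apply [sign_mean_le_binom_tail] with [m = floor((2 / a) s^3)]: both the flip
   term [(1 - 2a)^m] and the shifted binomial tail are at most [exp(-2 s^2)]. *)
Lemma sign_mean_upper_bound (a b s : R) t k : 0 < a -> a <= 1 / 2 -> 0 <= b -> b <= 1 ->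
  1 <= s -> s ^+ 4 = t%:R -> (k <= t)%N -> b * t%:R + (3 + 2 / a) * s ^+ 3 < k%:R ->
  sign_mean a b t k <= expR (- s ^+ 2).
Proof.
move=> a_gt0 a_le b_ge0 b_le1 s1 st kt kb; have s0 : 0 < s by lra.
have s3 : 1 <= s ^+ 3 by rewrite exprn_ege1.
set x := 2 / a * s ^+ 3; set m := Num.truncn x.
have x0 : 0 <= x by rewrite mulr_ge0 ?divr_ge0 ?exprn_ge0 //; lra.
have mx : m%:R <= x by rewrite truncn_le.
have xm : x < m%:R + 1 by rewrite natr1 truncnS_gt.
rewrite (_ : (3 + 2 / a) * s ^+ 3 = 3 * s ^+ 3 + x) in kb; last by rewrite /x; ring.
have mk : (m <= k)%N.
  rewrite -(ler_nat R); have : 0 <= b * t%:R by rewrite mulr_ge0.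
  lra.
apply: le_trans (sign_mean_le_binom_tail (ltW a_gt0) a_le b_ge0 b_le1 m t k) _.
apply: le_trans (twice_expR_le _) => //; last by rewrite exprn_ege1.
rewrite (_ : 2 * expR _ = expR (- (2 * s ^+ 2)) + expR (- (2 * s ^+ 2))); last by ring.
apply: lerD.
- apply: binom_tail_le_expR => //; first by rewrite st ler_nat (leq_trans (leq_subr m k)).
  by rewrite natrB //; move: kb; rewrite -st; lra.
apply: le_trans (pow_le_expR m _ (expR_ge1Dx (- (2 * a)))) _; first lra.
rewrite ler_expR.
have : x * (2 * a) = 4 * s ^+ 3 by rewrite /x; field; rewrite gt_eqF.
have : (x - 1) * (2 * a) <= m%:R * (2 * a) by rewrite ler_wpM2r //; lra.
have : s ^+ 2 <= s ^+ 3 by exact: ler_weXn2l.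
nra.
Qed.

End SignMeanEstimates.

Lemma natr_count (R : realType) (T : Type) (P : pred T) (s : seq T) :
  (count P s)%:R = \sum_(x <- s) (P x)%:R :> R.
Proof. by elim: s => [|x s IH]; rewrite ?big_nil ?big_cons //= natrD IH. Qed.

Section RadialSums.
Variables (R : realType) (V : countType) (adj : rel V) (r : V).
Hypotheses (locally_finite : forall v, finite_set [set u | adj v u])
  (connected : forall v, exists n, inball adj n r v).
Local Notation dist := (dist connected).
Local Notation ball_seq t := (fset_set (Defs.ball adj t r)).

Lemma vol_le k k' : (k <= k')%N -> (vol adj r k <= vol adj r k')%N.
Proof.
move=> kk; rewrite !(vol_count locally_finite connected (k' := k')) //.
by apply: sub_count => v /= /leq_trans; apply.
Qed.

Lemma radial_sum_lower (f : nat -> R) (c : R) rho t : (rho <= t)%N ->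
  (forall k, 0 <= f k) -> (forall k, (k <= rho)%N -> c <= f k) ->
  c * (vol adj r rho)%:R <= \sum_(v <- ball_seq t) f (dist v).
Proof.
move=> rt f0 fc; rewrite (vol_count locally_finite connected rt) natr_count mulr_sumr.
by apply: ler_sum => v _; case: leqP => vr; rewrite ?mulr1 ?fc ?mulr0 ?f0.
Qed.

Lemma radial_sum_upper (f : nat -> R) (e : R) rho t : 0 <= e ->
  (forall k, f k <= 1) -> (forall k, (rho < k <= t)%N -> f k <= e) ->
  \sum_(v <- ball_seq t) f (dist v) <= (vol adj r rho)%:R + e * (vol adj r t)%:R.
Proof.
move=> e0 f1 fe; apply: le_trans (_ : _ <= (vol adj r (minn rho t))%:R + e * (vol adj r t)%:R) _.
  2: by rewrite lerD2r ler_nat vol_le // geq_minl.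
rewrite !(vol_count locally_finite connected (k' := t)) ?geq_minr //.
rewrite !natr_count mulr_sumr -big_split /= !big_seq; apply: ler_sum => v.
rewrite (mem_ball locally_finite connected) leq_min => vt; rewrite vt andbT.
case: leqP => vr; rewrite /= ?add0r mulr1; last by rewrite fe // vr.
by rewrite -[f _]addr0 lerD ?f1.
Qed.

End RadialSums.

Section MeanBiasBounds.
Variables (R : realType) (V : countType) (adj : rel V) (r : V).
Hypotheses (locally_finite : forall v, finite_set [set u | adj v u])
  (connected : forall v, exists n, inball adj n r v).
Local Notation dist := (dist connected).
Local Notation ball_seq t := (fset_set (Defs.ball adj t r)).

Lemma vol_gt0 t : (0 < vol adj r t)%N.
Proof.
rewrite (vol_count locally_finite connected (leqnn t)) -has_count; apply/hasP; exists r.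
  by rewrite (mem_ball locally_finite connected) dist_root.
by rewrite dist_root.
Qed.

Lemma mean_bias_lower_bound (a b s K : R) t : a <= 1 / 2 -> 0 <= b -> b <= 1 ->
  1 <= s -> 2 <= K -> s ^+ 4 = t%:R ->
  (1 - expR (- s ^+ 2)) * (volR adj r (b * t%:R - K * s ^+ 3) / (vol adj r t)%:R)
  <= (\sum_(v <- ball_seq t) sign_mean a b t (dist v)) / (vol adj r t)%:R.
Proof.
move=> a_le b_ge0 b_le1 s1 K2 st.
rewrite mulrA ler_wpM2r ?invr_ge0 // /volR.
have sm0 k : 0 <= sign_mean a b t k by exact: sign_mean_ge0.
case: ltP => [_|x0]; first by rewrite mulr0 sumr_ge0.
have rho_le := truncn_le (b * t%:R - K * s ^+ 3); rewrite x0 in rho_le.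
apply: (radial_sum_lower locally_finite) => // [|k kr].
  rewrite -(ler_nat R); apply: le_trans rho_le _.
  have : 0 <= K * s ^+ 3 by rewrite mulr_ge0 ?exprn_ge0; lra.
  have : b * t%:R <= t%:R by rewrite ler_piMl.
  lra.
by apply: sign_mean_lower_bound s1 K2 st _ => //; apply: le_trans rho_le; rewrite ler_nat.
Qed.

Lemma mean_bias_upper_bound (a b s : R) t : 0 < a -> a <= 1 / 2 -> 0 <= b -> b <= 1 ->
  1 <= s -> s ^+ 4 = t%:R ->
  (\sum_(v <- ball_seq t) sign_mean a b t (dist v)) / (vol adj r t)%:R
  <= volR adj r (b * t%:R + (3 + 2 / a) * s ^+ 3) / (vol adj r t)%:R + expR (- s ^+ 2).
Proof.
move=> a_gt0 a_le b_ge0 b_le1 s1 st.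
have vt : 0 < (vol adj r t)%:R :> R by rewrite ltr0n vol_gt0.
rewrite /volR ifF; last first.
  by apply/negbTE; rewrite -leNgt addr_ge0 ?mulr_ge0 ?exprn_ge0 ?addr_ge0 ?divr_ge0 //; lra.
rewrite -[expR _](mulfK (lt0r_neq0 vt)) -mulrDl.
apply: ler_wpM2r; first by rewrite invr_ge0 ltW.
apply: (radial_sum_upper locally_finite) => [|k|k /andP[rk kt]]; first exact: expR_ge0.
  exact: sign_mean_le1 (ltW a_gt0) a_le b_ge0 b_le1 t k.
apply: (sign_mean_upper_bound a_gt0) => //; apply: lt_le_trans (truncnS_gt _) _.
by rewrite ler_nat.
Qed.

End MeanBiasBounds.

Lemma powR_quarter (R : realType) (x : R) : 1 <= x -> exists s : R,
  [/\ 1 <= s, s ^+ 4 = x, x `^ (1 - 1 / 4) = s ^+ 3 & x `^ (1 / 2) = s ^+ 2].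
Proof.
move=> x1; set s := x `^ (1 / 4); exists s.
have pw n : x `^ (1 / 4 * n%:R) = s ^+ n by rewrite powRrM powR_mulrn ?powR_ge0.
have s4 : s ^+ 4 = x by rewrite -pw (_ : 1 / 4 * 4%:R = 1) ?powRr1 //; [lra | field].
split => //; last 2 first.
- by rewrite -pw; congr (_ `^ _); field.
- by rewrite -pw; congr (_ `^ _); field.
rewrite leNgt; apply/negP => s_lt1.
by have := exprn_ilt1 4 (powR_ge0 x (1 / 4)) s_lt1; rewrite s4 ltNge x1.
Qed.

Theorem mainTheorem12 (R : realType) :
  exists C : R, 0 < C < 1 /\
  forall a b : R, 0 < a < 1 / 2 -> 0 < b < 1 ->
  exists K c1 c2 : R, 0 < K /\ 0 < c1 /\ 0 < c2 /\
  forall (V : countType) (adj : rel V) (r : V) (p : V -> V)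
    (d : measure_display) (T : measurableType d) (P : probability T R)
    (A B : nat -> V -> T -> bool) (t : nat),
    graph_ok adj -> bfs_parent adj r p -> coin_family P a b A B ->
    (1 <= t)%N ->
    (((1 - expR (- (c1 * t%:R `^ c2)))
        * (volR adj r (b * t%:R - K * t%:R `^ (1 - C)) / (vol adj r t)%:R))%:E
      <= \int[P]_w (lambda r p A B t w)%:E)%E /\
    (\int[P]_w (lambda r p A B t w)%:E
      <= (volR adj r (b * t%:R + K * t%:R `^ (1 - C)) / (vol adj r t)%:R
          + expR (- (c1 * t%:R `^ c2)))%:E)%E.
Proof.
exists (1 / 4); split; first lra.
move=> a b /andP[a0 a1] /andP[b0 b1].
have K2 : 2 <= 3 + 2 / a by rewrite -lerBlDl; apply: le_trans (divr_ge0 _ (ltW a0)); lra.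
exists (3 + 2 / a), 1, (1 / 2); split; first lra; split; first lra; split; first lra.
move=> V adj r p d T P A B t G_ok p_bfs coins t1.
have t1R : 1 <= t%:R :> R by rewrite ler1n.
have [s [s1 st -> ->]] := powR_quarter t1R.
rewrite (expected_lambda G_ok p_bfs coins) mul1r !lee_fin.
by split; [apply: (mean_bias_lower_bound G_ok.2.1) | apply: (mean_bias_upper_bound G_ok.2.1)]; lra.
Qed.
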